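(* In the logic $\mathrm{q}\L^{*}$, for all formulas $p,q,r,t\in F(V)$: (1) if $\vdash p\leftrightarrow q$, then $\vdash\neg p\leftrightarrow\neg q$; (2) if $\vdash p\leftrightarrow q$ and $\vdash r\leftrightarrow t$, then $\vdash(p\to r)\leftrightarrow(q\to t)$; (3) if $\vdash p\leftrightarrow q$ and $\vdash q\leftrightarrow r$, then $\vdash p\leftrightarrow r$; (4) $\vdash\neg(p\to q)\leftrightarrow(\neg p\to\neg q)$; (5) $\vdash p\leftrightarrow p$; (6) if $\vdash p_1\leftrightarrow r_1$, then $\vdash p\leftrightarrow r$, where $p_1$ is a subformula of $p$ and $r$ is obtained by replacing $p_1$ in $p$ with $r_1$; (7) $\vdash(p\to p)\leftrightarrow(q\to q)$; (8) $\vdash\neg\neg(p\to p)\leftrightarrow(p\to p)$; (9) $\vdash p\leftrightarrow\neg\neg p$; (10) $\vdash(\neg p\to q)\leftrightarrow(\neg q\to p)$; (11) $\vdash(\neg p)^{+}\leftrightarrow\neg p^{-}$ and $\vdash(\neg p)^{-}\leftrightarrow\neg p^{+}$; (12) if $\vdash p\leftrightarrow q$, then $\vdash p^{+}\leftrightarrow q^{+}$ and $\vdash p^{-}\leftrightarrow q^{-}$.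
   Context: Let $V=\{p_1,p_2,\ldots\}$ be a set of propositional variables and $F(V)$ the set of formulas built from $V$ and the constant $1$ with the binary connective $\to$ and the unary connectives $\neg$, ${}^{+}$, ${}^{-}$ (postfix ${}^+,{}^-$ bind tighter than $\neg$, which binds tighter than $\to$; so $\neg p^{-}$ means $\neg(p^{-})$). Abbreviations: $p\vee q:=((p^{+}\to q^{+})^{+}\to(\neg p)^{-})\to((q^{-}\to p^{-})^{-}\to p^{-})$; an axiom written $A\leftrightarrow B$ stands for the two axioms $A\to B$ and $B\to A$, and $\vdash A\leftrightarrow B$ means $\vdash A\to B$ and $\vdash B\to A$. Axiom schemas of $\mathrm{q}\L^{*}$ (for all formulas $p,q,r$): (Q1) $(p\to q)\leftrightarrow(\neg q\to\neg p)$; (Q2) $1\leftrightarrow((1\to p)\to 1)$; (Q3) $p\leftrightarrow((q\to q)\to p)$; (Q4) $(p\to q)\leftrightarrow((q^{+}\to p^{-})\to(p^{+}\to q^{-}))$; (Q5) $\neg(p\to q)\leftrightarrow(q\to p)$; (Q6) $(p\to(\neg p\to q))^{+}\leftrightarrow(p^{+}\to(\neg p^{+}\to q^{+}))$; (Q7) $(p\to(q\vee r))\leftrightarrow((p\to r)\vee(p\to q))$; (Q8) $(p\vee(q\vee r))\leftrightarrow((p\vee q)\vee r)$; (Q9) $((p\to 1)\to((q\to 1)\to r))\to((q\to 1)\to((p\to 1)\to r))$; (Q10) $p\to 1$; (Q11) $((1\to 1)\to p^{+})\leftrightarrow((p\to 1)\to 1)$ and $((1\to 1)\to p^{-})\leftrightarrow((p\to\neg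 1)\to\neg 1)$. Deduction rules: (R1) from $p$ and $p\to q$ infer $(r\to r)\to q$; (R2) from $(r\to r)\to(p\to q)$ infer $p\to q$; (R3) from $p\to q$ and $r\to t$ infer $(q\to r)\to(p\to t)$. A proof of $q_n$ is a finite sequence $q_1,\dots,q_n$ of formulas each of which is an axiom or obtained from earlier members by a rule; then $\vdash q_n$. *)

(* Formulas F(V) over V = {p_1, p_2, ...} (indexed by nat), constant 1,
   binary ->, unary neg, ^+, ^- . *)
Inductive form : Type :=
| Var : nat -> form
| One : form
| Imp : form -> form -> form
| Neg : form -> form
| Plus : form -> form
| Minus : form -> form.

Definition Vee (p q : form) : form :=
  Imp (Imp (Plus (Imp (Plus p) (Plus q))) (Minus (Neg p)))
      (Imp (Minus (Imp (Minus q) (Minus p))) (Minus p)).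

(* Axiom schemas of qL*; each A <-> B gives two axioms A -> B and B -> A. *)
Inductive axiom : form -> Prop :=
| Q1a p q : axiom (Imp (Imp p q) (Imp (Neg q) (Neg p)))
| Q1b p q : axiom (Imp (Imp (Neg q) (Neg p)) (Imp p q))
| Q2a p : axiom (Imp One (Imp (Imp One p) One))
| Q2b p : axiom (Imp (Imp (Imp One p) One) One)
| Q3a p q : axiom (Imp p (Imp (Imp q q) p))
| Q3b p q : axiom (Imp (Imp (Imp q q) p) p)
| Q4a p q : axiom (Imp (Imp p q)
                       (Imp (Imp (Plus q) (Minus p)) (Imp (Plus p) (Minus q))))
| Q4b p q : axiom (Imp (Imp (Imp (Plus q) (Minus p)) (Imp (Plus p) (Minus q)))
                       (Imp p q))
| Q5a p q : axiom (Imp (Neg (Imp p q)) (Imp q p))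
| Q5b p q : axiom (Imp (Imp q p) (Neg (Imp p q)))
| Q6a p q : axiom (Imp (Plus (Imp p (Imp (Neg p) q)))
                       (Imp (Plus p) (Imp (Neg (Plus p)) (Plus q))))
| Q6b p q : axiom (Imp (Imp (Plus p) (Imp (Neg (Plus p)) (Plus q)))
                       (Plus (Imp p (Imp (Neg p) q))))
| Q7a p q r : axiom (Imp (Imp p (Vee q r)) (Vee (Imp p r) (Imp p q)))
| Q7b p q r : axiom (Imp (Vee (Imp p r) (Imp p q)) (Imp p (Vee q r)))
| Q8a p q r : axiom (Imp (Vee p (Vee q r)) (Vee (Vee p q) r))
| Q8b p q r : axiom (Imp (Vee (Vee p q) r) (Vee p (Vee q r)))
| Q9 p q r : axiom (Imp (Imp (Imp p One) (Imp (Imp q One) r))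
                        (Imp (Imp q One) (Imp (Imp p One) r)))
| Q10 p : axiom (Imp p One)
| Q11a p : axiom (Imp (Imp (Imp One One) (Plus p)) (Imp (Imp p One) One))
| Q11b p : axiom (Imp (Imp (Imp p One) One) (Imp (Imp One One) (Plus p)))
| Q11c p : axiom (Imp (Imp (Imp One One) (Minus p))
                      (Imp (Imp p (Neg One)) (Neg One)))
| Q11d p : axiom (Imp (Imp (Imp p (Neg One)) (Neg One))
                      (Imp (Imp One One) (Minus p))).

(* Provability |- : closure of the axioms under rules R1, R2, R3
   (equivalent to existence of a finite proof sequence). *)
Inductive provable : form -> Prop :=
| pr_ax p : axiom p -> provable p
| pr_R1 p q r : provable p -> provable (Imp p q) -> provable (Imp (Imp r r) q)
| pr_R2 p q r : provable (Imp (Imp r r) (Imp p q)) -> provable (Imp p q)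
| pr_R3 p q r t : provable (Imp p q) -> provable (Imp r t) ->
                  provable (Imp (Imp q r) (Imp p t)).

Definition piff (a b : form) : Prop := provable (Imp a b) /\ provable (Imp b a).

Inductive subformula (s : form) : form -> Prop :=
| sub_refl : subformula s s
| sub_impl p q : subformula s p -> subformula s (Imp p q)
| sub_impr p q : subformula s q -> subformula s (Imp p q)
| sub_neg p : subformula s p -> subformula s (Neg p)
| sub_plus p : subformula s p -> subformula s (Plus p)
| sub_minus p : subformula s p -> subformula s (Minus p).

(* replace a b p r : r is obtained from p by replacing (some occurrences of)
   the subformula a by b. *)
Inductive replace (a b : form) : form -> form -> Prop :=
| rep_hit : replace a b a b
| rep_keep p : replace a b p p
| rep_imp p q p' q' : replace a b p p' -> replace a b q q' ->
                      replace a b (Imp p q) (Imp p' q')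
| rep_neg p p' : replace a b p p' -> replace a b (Neg p) (Neg p')
| rep_plus p p' : replace a b p p' -> replace a b (Plus p) (Plus p')
| rep_minus p p' : replace a b p p' -> replace a b (Minus p) (Minus p').


(* Rules R1 and R2 together give modus ponens for implicational conclusions,
   and R3 then gives transitivity of provable implication, so [piff] is an
   equivalence and, by Q1, a congruence for [Imp] and [Neg].  Axioms Q3 and
   Q11 rewrite [Plus p] as [(p -> 1) -> 1] and [Minus p] as
   [(p -> ~1) -> ~1], which makes both operators monotone.  Applying Q5 twice
   shows that an implication equals its double negation, and by Q3 every
   formula is equivalent to an implication. *)

Lemma provable_mp_imp p a b :
  provable p -> provable (Imp p (Imp a b)) -> provable (Imp a b).
Proof.
  intros Hp Himp. apply (pr_R2 a b One). exact (pr_R1 _ _ One Hp Himp).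
Qed.

Lemma provable_imp_trans3 a b c d :
  provable (Imp a b) -> provable (Imp b c) -> provable (Imp c d) ->
  provable (Imp a d).
Proof.
  intros Hab Hbc Hcd. apply (provable_mp_imp _ _ _ Hbc). apply pr_R3; assumption.
Qed.

(* R3 only chains through a middle implication; Q9 with p = q = 1 supplies one. *)
Lemma provable_imp_refl x : provable (Imp x x).
Proof.
  set (T := Imp One One).
  assert (Hin : provable (Imp x (Imp T (Imp T x)))).
  { eapply provable_imp_trans3.
    - apply pr_ax, (Q3a x One).
    - apply pr_ax, (Q3a (Imp T x) One).
    - apply pr_ax, (Q9 One One x). }
  eapply provable_imp_trans3.
  - exact Hin.
  - apply pr_ax, (Q3b (Imp T x) One).
  - apply pr_ax, (Q3b x One).
Qed.

Lemma provable_imp_trans a b c :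
  provable (Imp a b) -> provable (Imp b c) -> provable (Imp a c).
Proof.
  intros Hab Hbc. exact (provable_imp_trans3 _ _ _ _ Hab Hbc (provable_imp_refl c)).
Qed.

Lemma provable_imp_imp_mono c p q :
  provable (Imp p q) -> provable (Imp (Imp (Imp p c) c) (Imp (Imp q c) c)).
Proof.
  intros Hpq. apply pr_R3; [| apply provable_imp_refl].
  apply pr_R3; [exact Hpq | apply provable_imp_refl].
Qed.

Lemma piff_refl p : piff p p.
Proof. split; apply provable_imp_refl. Qed.

Lemma piff_sym p q : piff p q -> piff q p.
Proof. intros [Hpq Hqp]. split; assumption. Qed.

Lemma piff_trans p q r : piff p q -> piff q r -> piff p r.
Proof.
  intros [Hpq Hqp] [Hqr Hrq].
  split; eapply provable_imp_trans; eassumption.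
Qed.

Lemma piff_of_axioms a b : axiom (Imp a b) -> axiom (Imp b a) -> piff a b.
Proof. intros Hab Hba. split; apply pr_ax; assumption. Qed.

Lemma piff_imp p q r t : piff p q -> piff r t -> piff (Imp p r) (Imp q t).
Proof. intros [Hpq Hqp] [Hrt Htr]. split; apply pr_R3; assumption. Qed.

Lemma piff_neg p q : piff p q -> piff (Neg p) (Neg q).
Proof.
  intros [Hpq Hqp]. split.
  - exact (provable_mp_imp _ _ _ Hqp (pr_ax _ (Q1a q p))).
  - exact (provable_mp_imp _ _ _ Hpq (pr_ax _ (Q1a p q))).
Qed.

Lemma piff_one_one_imp p : piff p (Imp (Imp One One) p).
Proof. apply piff_of_axioms; constructor. Qed.

Lemma piff_imp_contra p q : piff (Imp p q) (Imp (Neg q) (Neg p)).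
Proof. apply piff_of_axioms; constructor. Qed.

Lemma piff_neg_imp_flip p q : piff (Neg (Imp p q)) (Imp q p).
Proof. apply piff_of_axioms; constructor. Qed.

Lemma piff_neg_neg_imp a b : piff (Neg (Neg (Imp a b))) (Imp a b).
Proof.
  eapply piff_trans; [apply piff_neg, piff_neg_imp_flip |].
  apply piff_neg_imp_flip.
Qed.

Lemma piff_neg_neg p : piff p (Neg (Neg p)).
Proof.
  eapply piff_trans; [apply piff_one_one_imp |].
  eapply piff_trans; [apply piff_sym, piff_neg_neg_imp |].
  apply piff_neg, piff_neg, piff_sym, piff_one_one_imp.
Qed.

Lemma piff_plus_imp_one p : piff (Plus p) (Imp (Imp p One) One).
Proof.
  eapply piff_trans; [apply piff_one_one_imp |].
  apply piff_of_axioms; constructor.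
Qed.

Lemma piff_minus_imp_neg_one p :
  piff (Minus p) (Imp (Imp p (Neg One)) (Neg One)).
Proof.
  eapply piff_trans; [apply piff_one_one_imp |].
  apply piff_of_axioms; constructor.
Qed.

Lemma provable_plus_mono p q :
  provable (Imp p q) -> provable (Imp (Plus p) (Plus q)).
Proof.
  intros Hpq. eapply provable_imp_trans3.
  - exact (proj1 (piff_plus_imp_one p)).
  - apply provable_imp_imp_mono, Hpq.
  - exact (proj2 (piff_plus_imp_one q)).
Qed.

Lemma provable_minus_mono p q :
  provable (Imp p q) -> provable (Imp (Minus p) (Minus q)).
Proof.
  intros Hpq. eapply provable_imp_trans3.
  - exact (proj1 (piff_minus_imp_neg_one p)).
  - apply provable_imp_imp_mono, Hpq.
  - exact (proj2 (piff_minus_imp_neg_one q)).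
Qed.

Lemma piff_plus p q : piff p q -> piff (Plus p) (Plus q).
Proof. intros [Hpq Hqp]. split; apply provable_plus_mono; assumption. Qed.

Lemma piff_minus p q : piff p q -> piff (Minus p) (Minus q).
Proof. intros [Hpq Hqp]. split; apply provable_minus_mono; assumption. Qed.

Lemma piff_replace p1 r1 p r : piff p1 r1 -> replace p1 r1 p r -> piff p r.
Proof.
  intros H Hrep.
  induction Hrep; auto using piff_refl, piff_imp, piff_neg, piff_plus, piff_minus.
Qed.

Lemma piff_neg_imp_distr p q : piff (Neg (Imp p q)) (Imp (Neg p) (Neg q)).
Proof. exact (piff_trans _ _ _ (piff_neg_imp_flip p q) (piff_imp_contra q p)). Qed.

Lemma piff_imp_self p q : piff (Imp p p) (Imp q q).
Proof.
  split.
  - exact (pr_R1 _ _ p (provable_imp_refl q) (provable_imp_refl _)).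
  - exact (pr_R1 _ _ q (provable_imp_refl p) (provable_imp_refl _)).
Qed.

Lemma piff_neg_imp_contra p q : piff (Imp (Neg p) q) (Imp (Neg q) p).
Proof.
  eapply piff_trans; [apply piff_imp_contra |].
  apply piff_imp; [apply piff_refl | apply piff_sym, piff_neg_neg].
Qed.

Lemma piff_plus_neg p : piff (Plus (Neg p)) (Neg (Minus p)).
Proof.
  set (w := Imp (Neg One) (Imp One (Neg p))).
  assert (Hl : piff (Plus (Neg p)) w).
  { eapply piff_trans; [apply piff_plus_imp_one |].
    eapply piff_trans; [apply piff_imp_contra |].
    apply piff_imp; [apply piff_refl | apply piff_neg_imp_flip]. }
  assert (Hr : piff (Neg (Minus p)) w).
  { eapply piff_trans; [apply piff_neg, piff_minus_imp_neg_one |].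
    eapply piff_trans; [apply piff_neg_imp_flip |].
    apply piff_imp; [apply piff_refl |].
    eapply piff_trans; [apply piff_imp_contra |].
    apply piff_imp; [apply piff_sym, piff_neg_neg | apply piff_refl]. }
  exact (piff_trans _ _ _ Hl (piff_sym _ _ Hr)).
Qed.

Lemma piff_minus_neg p : piff (Minus (Neg p)) (Neg (Plus p)).
Proof.
  set (w := Imp One (Imp p One)).
  assert (Hl : piff (Minus (Neg p)) w).
  { eapply piff_trans; [apply piff_minus_imp_neg_one |].
    eapply piff_trans;
      [apply piff_imp; [apply piff_sym, (piff_imp_contra One p) | apply piff_refl] |].
    eapply piff_trans; [apply piff_imp_contra |].
    apply piff_imp; [apply piff_sym, piff_neg_neg | apply piff_neg_imp_flip]. }
  assert (Hr : piff (Neg (Plus p)) w).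
  { eapply piff_trans; [apply piff_neg, piff_plus_imp_one |].
    apply piff_neg_imp_flip. }
  exact (piff_trans _ _ _ Hl (piff_sym _ _ Hr)).
Qed.

Theorem proposition5p1 :
  (* (1) *)
  (forall p q : form, piff p q -> piff (Neg p) (Neg q)) /\
  (* (2) *)
  (forall p q r t : form, piff p q -> piff r t -> piff (Imp p r) (Imp q t)) /\
  (* (3) *)
  (forall p q r : form, piff p q -> piff q r -> piff p r) /\
  (* (4) *)
  (forall p q : form, piff (Neg (Imp p q)) (Imp (Neg p) (Neg q))) /\
  (* (5) *)
  (forall p : form, piff p p) /\
  (* (6) *)
  (forall p p1 r r1 : form, piff p1 r1 -> subformula p1 p ->
     replace p1 r1 p r -> piff p r) /\
  (* (7) *)
  (forall p q : form, piff (Imp p p) (Imp q q)) /\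
  (* (8) *)
  (forall p : form, piff (Neg (Neg (Imp p p))) (Imp p p)) /\
  (* (9) *)
  (forall p : form, piff p (Neg (Neg p))) /\
  (* (10) *)
  (forall p q : form, piff (Imp (Neg p) q) (Imp (Neg q) p)) /\
  (* (11) *)
  (forall p : form, piff (Plus (Neg p)) (Neg (Minus p)) /\
                    piff (Minus (Neg p)) (Neg (Plus p))) /\
  (* (12) *)
  (forall p q : form, piff p q -> piff (Plus p) (Plus q) /\ piff (Minus p) (Minus q)).
Proof.
  split; [exact piff_neg |].
  split; [exact piff_imp |].
  split; [exact piff_trans |].
  split; [exact piff_neg_imp_distr |].
  split; [exact piff_refl |].
  split; [intros p p1 r r1 H _ Hrep; exact (piff_replace _ _ _ _ H Hrep) |].
  split; [exact piff_imp_self |].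
  split; [intros p; apply piff_neg_neg_imp |].
  split; [exact piff_neg_neg |].
  split; [exact piff_neg_imp_contra |].
  split; [intros p; split; [apply piff_plus_neg | apply piff_minus_neg] |].
  intros p q H; split; [apply piff_plus | apply piff_minus]; exact H.
Qed.
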